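(* Let $\mathfrak g_0=\mathfrak{sl}(2n,\mathbb R)$, $n\ge2$. A $\Delta^+(\mathfrak k,\mathfrak t_f)$-dominant weight $\mu=(a_1,\dots,a_n)$ (so $a_1\ge\cdots\ge a_{n-1}\ge|a_n|$, with all $a_i\in\mathbb Z$ or all $a_i\in\mathbb Z+\tfrac12$) lies in $R(\Delta(\mathfrak p,\mathfrak t_f))$ if and only if $$a_1+\cdots+a_k\le 2nk-k^2+k\ \ (1\le k\le n)\quad\text{and}\quad a_1+\cdots+a_{n-1}-a_n\le n^2+n.$$ In particular every such $\mu$ with $a_1\le n+1$ is u-small.
   Context: Here $\mathfrak k=\mathfrak{so}(2n,\mathbb C)$ and $i\mathfrak t_{f,0}^*$ has coordinates with respect to an orthogonal basis $e_1,\dots,e_n$ (of equal lengths); $\Delta^+(\mathfrak k,\mathfrak t_f)=\{e_i\pm e_j:1\le i<j\le n\}$ and $\Delta(\mathfrak p,\mathfrak t_f)=\{\pm(e_i\pm e_j):i<j\}\cup\{\pm2e_i\}$. $R(\Delta(\mathfrak p,\mathfrak t_f))=\{\sum_{\alpha\in\Delta(\mathfrak p,\mathfrak t_f)}b_\alpha\alpha:0\le b_\alpha\le1\}$, and $\mu$ is called u-small if it lies in this set. *)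

From HB Require Import structures.
From mathcomp Require Import all_boot all_order all_algebra.
Set Implicit Arguments. Unset Strict Implicit. Unset Printing Implicit Defensive.
Import Order.TTheory GRing.Theory Num.Theory.
Local Open Scope ring_scope.

(* Weights in i t_{f,0}^* for k = so(2n,C): row vectors of coordinates
   w.r.t. the orthogonal basis e_1,...,e_n (indexed 0..n-1). *)
Definition ebasis (R : realFieldType) (n : nat) (i : 'I_n) : 'rV[R]_n :=
  delta_mx 0 i.

Definition sgnb (R : realFieldType) (b : bool) : R := if b then 1 else -1.

(* Delta(p,t_f) = { s (e_i + t e_j) : i<j, s,t in {+1,-1} } u { s 2 e_i }.
   R(Delta(p,t_f)) = { sum_alpha b_alpha alpha : 0 <= b_alpha <= 1 }. *)
Definition in_R_Delta_p (R : realFieldType) (n : nat) (mu : 'rV[R]_n) : Prop :=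
  exists (b1 : 'I_n -> 'I_n -> bool -> bool -> R) (b2 : 'I_n -> bool -> R),
    (forall i j s t, 0 <= b1 i j s t <= 1) /\
    (forall i s, 0 <= b2 i s <= 1) /\
    mu = \sum_(i < n) \sum_(j < n | (i < j)%N) \sum_(s : bool) \sum_(t : bool)
            b1 i j s t *: (sgnb R s *: (ebasis R i + sgnb R t *: ebasis R j))
         + \sum_(i < n) \sum_(s : bool) b2 i s *: (sgnb R s *: (2 *: ebasis R i)).

Definition u_small (R : realFieldType) (n : nat) (mu : 'rV[R]_n) : Prop :=
  in_R_Delta_p mu.

(* A linear form [v |-> sum_m f_m v_m] is at most [|f_i + f_j| + |f_i - f_j|] on the
   generators [+-(e_i +- e_j)] weighted in [0, 1], and at most [2 |f_i|] on [+-2 e_i];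
   testing with the indicator of the first [k] coordinates and with the signs
   [(1, ..., 1, -1)] gives the inequalities.
   Conversely, [sum_i W_i e_i + sum_(i<j) (X_ij e_i + Y_ij e_j)] lies in R(Delta(p)) as
   soon as [|W_i| <= 2] and [|X_ij| + |Y_ij| <= 2], since the four generators of the
   plane of [e_i, e_j] span its l1-ball of radius 2. Replacing [a_n] by [|a_n|], such a
   decomposition of a nonincreasing nonnegative vector [b] with
   [b_1 + ... + b_k <= 2nk - k^2 + k] is built by induction on [n]: the pair [(1, j)]
   provides [min(max(b_j - L, 0), 2)] to coordinate [j] and the rest of its capacity to
   coordinate [1], for a water level [L >= 0] chosen by the intermediate value theorem
   for piecewise linear functions so that the capacity [2n] available to coordinate [1]
   is exactly used (or [L = 0]). The residual vector is again nonincreasing, and it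
   satisfies the prefix bounds for [n - 1] because [k |-> 2nk - k^2 + k] is concave while
   the residual prefix sums are affine in [k] wherever the level [L] is active. *)

From HB Require Import structures.
From mathcomp Require Import all_boot all_order all_algebra.
From mathcomp Require Import ring lra zify.
Set Implicit Arguments.
Unset Strict Implicit.
Unset Printing Implicit Defensive.
Import Order.TTheory GRing.Theory Num.Theory.
Local Open Scope ring_scope.

Section PositivePart.
Variable R : realFieldType.
Implicit Types t x y L : R.

Definition pospart t : R := if 0 <= t then t else 0.

Definition clamp2 t : R := if t <= 0 then 0 else if t <= 2 then t else 2.

Lemma pospart_id t : 0 <= t -> pospart t = t.
Proof. by rewrite /pospart => ->. Qed.

Lemma pospart_eq0 t : t <= 0 -> pospart t = 0.
Proof. by rewrite /pospart; case: (lerP 0 t) => ? ?; lra. Qed.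

Lemma pospartE t : pospart t = t + pospart (- t).
Proof. by rewrite /pospart; case: (lerP 0 t) => ?; case: (lerP 0 (- t)) => ?; lra. Qed.

Lemma pospart_le1 t : -1 <= t <= 1 -> 0 <= pospart t <= 1.
Proof. by move=> /andP [? ?]; rewrite /pospart; case: (lerP 0 t) => ?; apply/andP; split; lra. Qed.

Lemma clamp2E t : clamp2 t = pospart t - pospart (t - 2).
Proof.
by rewrite /clamp2 /pospart; case: (lerP t 0) => ?; case: (lerP t 2) => ?;
  case: (lerP 0 t) => ?; case: (lerP 0 (t - 2)) => ?; lra.
Qed.

Lemma clamp2_ge0_le2 t : 0 <= clamp2 t <= 2.
Proof. by rewrite /clamp2; case: (lerP t 0) => ?; case: (lerP t 2) => ?; apply/andP; split; lra. Qed.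

Lemma clamp2_eq0 t : t <= 0 -> clamp2 t = 0.
Proof. by rewrite /clamp2 => ->. Qed.

Lemma clamp2_eq2 t : 2 <= t -> clamp2 t = 2.
Proof. by rewrite /clamp2; case: (lerP t 0) => ?; case: (lerP t 2) => ? ?; lra. Qed.

Lemma sub_clamp2_mid x L : L < x -> x < L + 2 -> x - clamp2 (x - L) = L.
Proof. by rewrite /clamp2; case: (lerP (x - L) 0) => ?; case: (lerP (x - L) 2) => ? ? ?; lra. Qed.

Lemma sub_clamp2_homo L : {homo (fun x => x - clamp2 (x - L)) : x y / x <= y}.
Proof.
move=> x y h /=; rewrite /clamp2; case: (lerP (x - L) 0) => ?; case: (lerP (x - L) 2) => ?;
  case: (lerP (y - L) 0) => ?; case: (lerP (y - L) 2) => ?; lra.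
Qed.

Lemma sub_clamp2_ge0 x L : 0 <= x -> 0 <= L -> 0 <= x - clamp2 (x - L).
Proof. by rewrite /clamp2; case: (lerP (x - L) 0) => ?; case: (lerP (x - L) 2) => ? ? ?; lra. Qed.

Lemma pos_dot_le_norm (bp bm z : R) : 0 <= bp <= 1 -> 0 <= bm <= 1 -> bp * z + bm * (- z) <= `|z|.
Proof.
move=> /andP [? ?] /andP [? ?].
by case: (lerP 0 z) => hz; [rewrite ger0_norm // | rewrite ltr0_norm //]; nra.
Qed.

End PositivePart.

Section RampIVT.
Variable R : realFieldType.
Implicit Types (c s a b B x : R) (l : seq (R * R)).

Definition ramp_comb c s l x : R := c + s * x + \sum_(p <- l) p.1 * pospart (p.2 - x).

Lemma ramp_comb_cons_ge c s p l x :
  p.2 <= x -> ramp_comb c s (p :: l) x = ramp_comb c s l x.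
Proof. by move=> hx; rewrite /ramp_comb big_cons pospart_eq0 ?mulr0 ?add0r // subr_le0. Qed.

Lemma ramp_comb_cons_le c s p l x :
  x <= p.2 -> ramp_comb c s (p :: l) x = ramp_comb (c + p.1 * p.2) (s - p.1) l x.
Proof. by move=> hx; rewrite /ramp_comb big_cons pospart_id ?subr_ge0 //; ring. Qed.

Lemma affine_ivt c s a b B :
  a <= b -> B <= c + s * a -> c + s * b <= B -> exists2 L, a <= L <= b & c + s * L = B.
Proof.
move=> hab ha hb; have [s0 | hs] := eqVneq s 0.
  by exists a; [rewrite lexx hab | move: ha hb; rewrite s0 !mul0r; lra].
have hsL : s * ((B - c) / s) = B - c by rewrite mulrC divfK.
exists ((B - c) / s); last by rewrite hsL; ring.
move: hsL; set L := (B - c) / s => hsL.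
by case: (ltrgtP s 0) => hs'; [apply/andP; split; nra | apply/andP; split; nra | move: hs; rewrite hs' eqxx].
Qed.

Lemma ramp_comb_ivt l c s a b B :
  a <= b -> B <= ramp_comb c s l a -> ramp_comb c s l b <= B ->
  exists2 L, a <= L <= b & ramp_comb c s l L = B.
Proof.
elim: l c s a b => [|p l IH] c s a b hab.
  by rewrite /ramp_comb !big_nil !addr0 => ha hb; have [L ? ?] := affine_ivt hab ha hb;
    exists L => //; rewrite /ramp_comb big_nil addr0.
have [hpa | hap] := lerP p.2 a.
  rewrite !ramp_comb_cons_ge //; last exact: le_trans hpa hab.
  move=> ha hb; have [L /andP [haL hLb] hL] := IH c s a b hab ha hb.
  by exists L; rewrite ?haL ?ramp_comb_cons_ge //; apply: le_trans hpa haL.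
have [hbp | hpb] := lerP b p.2.
  rewrite !ramp_comb_cons_le // ?(ltW hap) // => ha hb.
  have [L /andP [haL hLb] hL] := IH _ _ a b hab ha hb.
  by exists L; rewrite ?haL ?ramp_comb_cons_le //; apply: le_trans hLb hbp.
(* Otherwise cut [[a, b]] at the kink [p.2] and recurse on the half where [B] is crossed. *)
move=> ha hb; have [hy | hy] := lerP (ramp_comb c s (p :: l) p.2) B.
  move: ha hy; rewrite !ramp_comb_cons_le // ?(ltW hap) // => ha hy.
  have [L /andP [haL hLy] hL] := IH _ _ a p.2 (ltW hap) ha hy.
  by exists L; [rewrite haL (le_trans hLy (ltW hpb)) | rewrite ramp_comb_cons_le].
move: hy hb; rewrite !ramp_comb_cons_ge ?(ltW hpb) // => hy hb.
have [L /andP [hyL hLb] hL] := IH _ _ p.2 b (ltW hpb) (ltW hy) hb.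
by exists L; [rewrite hLb (le_trans (ltW hap) hyL) | rewrite ramp_comb_cons_ge].
Qed.

End RampIVT.

Section Capacity.
Variable R : realFieldType.

Definition cap (n k : nat) : R := 2 * n%:R * k%:R - k%:R ^+ 2 + k%:R.

Lemma capSn n k : cap n.+1 k = cap n k + 2 * k%:R.
Proof. by rewrite /cap -natr1; ring. Qed.

Lemma capSS n k : cap n.+1 k.+1 = cap n k + 2 * n.+1%:R.
Proof. by rewrite /cap -!natr1; ring. Qed.

Lemma cap1 n : cap n 1 = 2 * n%:R.
Proof. by rewrite /cap; ring. Qed.

Lemma cap0 n : cap n 0 = 0.
Proof. by rewrite /cap; ring. Qed.

Lemma cap_homo n q k : (q <= k <= n)%N -> cap n q <= cap n k.
Proof.
move=> /andP [hqk hkn]; rewrite /cap.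
have h1 : (q%:R : R) <= k%:R by rewrite ler_nat.
have h2 : (k%:R : R) <= n%:R by rewrite ler_nat.
have h3 : (0 : R) <= q%:R by rewrite ler0n.
nra.
Qed.

Lemma cap_natE n k : (k <= n)%N -> cap n k = (2 * n * k - k ^ 2 + k)%N%:R.
Proof.
move=> hk; rewrite natrD natrB; last by rewrite !expnS expn0 muln1; nia.
by rewrite !natrM /cap; ring.
Qed.

Lemma sum_nat_cap n k : (k <= n)%N -> (\sum_(i < k) (2 * (n - i)))%N = (2 * n * k - k ^ 2 + k)%N.
Proof.
elim: k => [|k IH] hk; first by rewrite big_ord0 muln0.
by rewrite big_ord_recr /= (IH (ltnW hk)) !expnS !expn0 !muln1; nia.
Qed.

Lemma le_cap_affine n q k p (t0 d : R) : (q <= k <= p)%N ->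
  t0 <= cap n q -> t0 + (p - q)%:R * d <= cap n p -> t0 + (k - q)%:R * d <= cap n k.
Proof.
move=> /andP [hqk hkp] hq hp.
have [epq | hpq] := eqVneq p q.
  have -> : k = q by lia.
  by rewrite subnn mul0r addr0.
have hQK : (q%:R : R) <= k%:R by rewrite ler_nat.
have hKP : (k%:R : R) <= p%:R by rewrite ler_nat.
have hQP : (q%:R : R) < p%:R by rewrite ltr_nat ltn_neqAle eq_sym hpq (leq_trans hqk hkp).
move: hp; rewrite !natrB ?(leq_trans hqk hkp) // => hp.
have hpos : (0 : R) < p%:R - q%:R by rewrite subr_gt0.
rewrite -(ler_pM2l hpos).
have concave : (p%:R - q%:R) * cap n k = (p%:R - k%:R) * cap n q + (k%:R - q%:R) * cap n p
     + (p%:R - k%:R) * (k%:R - q%:R) * (p%:R - q%:R) by rewrite /cap; ring.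
rewrite concave.
have : (p%:R - k%:R) * t0 <= (p%:R - k%:R) * cap n q by apply: ler_wpM2l; lra.
have : (k%:R - q%:R) * (t0 + (p%:R - q%:R) * d) <= (k%:R - q%:R) * cap n p by apply: ler_wpM2l; lra.
have : 0 <= (p%:R - k%:R) * (k%:R - q%:R) * (p%:R - q%:R) :> R by rewrite !mulr_ge0 //; lra.
move: (p%:R : R) (q%:R : R) (k%:R : R) => P Q K; nra.
Qed.

End Capacity.

Lemma downward_closed_prefix (P : pred nat) n :
  (forall i j, (i <= j)%N -> (j < n)%N -> P j -> P i) ->
  exists2 q, (q <= n)%N & forall j, (j < n)%N -> P j = (j < q)%N.
Proof.
elim: n => [|n IH] hP; first by exists 0%N.
have [q hq hQ] : exists2 q, (q <= n)%N & forall j, (j < n)%N -> P j = (j < q)%N.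
  by apply: IH => i j hij hjn; apply: hP => //; lia.
case hPn: (P n).
  by exists n.+1 => // j hj; rewrite hj; apply: (hP j n) => //; lia.
exists q => [|j hj]; first lia.
case: (ltngtP j n) => hjn; [exact: hQ | lia | by rewrite hjn hPn; apply/esym/negbTE; rewrite -leqNgt].
Qed.

Lemma sumr_const_nat_mul (R : realFieldType) m k (c : R) : \sum_(m <= j < k) c = (k - m)%:R * c.
Proof. by rewrite sumr_const_nat mulr_natl. Qed.

Section Residual.
Variables (R : realFieldType) (n : nat) (x : nat -> R) (b0 L : R).
Hypothesis x_sorted : forall i j, (i <= j)%N -> (j < n)%N -> x j <= x i.
Hypothesis x_ge0 : forall j, (j < n)%N -> 0 <= x j.
Hypothesis x_prefix : forall k, (k <= n)%N -> \sum_(0 <= j < k) x j <= cap R n.+1 k.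
Hypothesis b0x_prefix : forall k, (k <= n)%N -> b0 + \sum_(0 <= j < k) x j <= cap R n.+1 k.+1.

Local Notation resid j := (x j - clamp2 (x j - L)).
Local Notation T k := (\sum_(0 <= j < k) resid j).

Lemma resid_prefix_split a k : (a <= k)%N -> T k = T a + \sum_(a <= j < k) resid j.
Proof. by move=> hak; rewrite (@big_cat_nat _ _ _ a). Qed.

(* [q] counts the [j] with [clamp2 (x j - L) = 2] and [p] those with [clamp2 (x j - L) > 0],
   so the residual is [x j - 2], then [L], then [x j]. *)
Section Regions.
Variables q p : nat.
Hypothesis q_le_n : (q <= n)%N.
Hypothesis p_le_n : (p <= n)%N.
Hypothesis q_def : forall j, (j < n)%N -> (L + 2 <= x j) = (j < q)%N.
Hypothesis p_def : forall j, (j < n)%N -> (L < x j) = (j < p)%N.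

Lemma q_le_p : (q <= p)%N.
Proof.
rewrite leqNgt; apply/negP => hpq.
have hpn : (p < n)%N := leq_trans hpq q_le_n.
have := q_def hpn; have := p_def hpn; rewrite hpq ltnn => /negbT.
by rewrite -leNgt => ? ?; lra.
Qed.

Lemma resid_prefix_head k : (k <= q)%N -> T k <= cap R n k.
Proof.
move=> hk; rewrite (@eq_big_nat _ _ _ _ _ _ (fun j => x j - 2)); last first.
  move=> j /andP [_ hj]; rewrite clamp2_eq2 //.
  by move: (q_def (leq_trans hj (leq_trans hk q_le_n))); rewrite (leq_trans hj hk); lra.
rewrite sumrB sumr_const_nat_mul subn0.
by have := x_prefix (leq_trans hk q_le_n); rewrite capSn; lra.
Qed.

Lemma resid_prefix_mid k : (q <= k <= p)%N -> T k = T q + (k - q)%:R * L.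
Proof.
move=> /andP [hqk hkp]; rewrite (resid_prefix_split hqk) -sumr_const_nat_mul; congr (_ + _).
apply: eq_big_nat => j /andP [hqj hjk]; have hjn : (j < n)%N by lia.
apply: sub_clamp2_mid; first by rewrite p_def //; lia.
by rewrite ltNge q_def // -leqNgt.
Qed.

Lemma resid_prefix_tail k : (p <= k <= n)%N ->
  b0 + \sum_(0 <= j < n) clamp2 (x j - L) = 2 * n.+1%:R -> T k <= cap R n k.
Proof.
move=> /andP [hpk hkn] hbudget.
have -> : T k = \sum_(0 <= j < k) x j - \sum_(0 <= j < n) clamp2 (x j - L).
  rewrite sumrB (@big_cat_nat _ _ _ k 0 n) //= [X in _ - (_ + X)]big1_seq ?addr0 //.
  move=> j; rewrite mem_index_iota => /andP [_ /andP [hkj hjn]]; apply: clamp2_eq0.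
  by move: (p_def hjn); rewrite ltnNge (leq_trans hpk hkj) => /negbT; rewrite -leNgt; lra.
by have := b0x_prefix hkn; rewrite capSS; lra.
Qed.

Lemma resid_prefix_level0 k : L = 0 -> (q <= k <= n)%N -> T k = T q.
Proof.
move=> L0 /andP [hqk hkn]; rewrite (resid_prefix_split hqk) [X in _ + X]big1_seq ?addr0 // => j.
rewrite mem_index_iota => /andP [_ /andP [hqj hjk]]; have hjn : (j < n)%N := leq_trans hjk hkn.
move: (q_def hjn) (x_ge0 hjn); rewrite ltnNge hqj L0 add0r subr0 => /negbT; rewrite -ltNge.
move=> hx2 hx0; rewrite /clamp2; case: (lerP (x j) 0) => ?; case: (lerP (x j) 2) => ?; lra.
Qed.

End Regions.

Lemma resid_prefix_le_cap :
  0 <= L -> L = 0 \/ b0 + \sum_(0 <= j < n) clamp2 (x j - L) = 2 * n.+1%:R ->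
  forall k, (k <= n)%N -> T k <= cap R n k.
Proof.
move=> L_ge0 level k hkn.
have [q q_le_n q_def] := @downward_closed_prefix (fun j => L + 2 <= x j) n
  (fun i j hij hjn hj => le_trans hj (x_sorted hij hjn)).
have [p p_le_n p_def] := @downward_closed_prefix (fun j => L < x j) n
  (fun i j hij hjn hj => lt_le_trans hj (x_sorted hij hjn)).
rewrite /= in q_def p_def.
have hqp := q_le_p q_le_n q_def p_def.
have [hkq | hqk] := leqP k q; first exact (resid_prefix_head q_le_n q_def hkq).
have hTq := resid_prefix_head q_le_n q_def (leqnn q).
case: level => [L0 | hbudget].
  rewrite (resid_prefix_level0 q_def L0) ?(ltnW hqk) //.
  by apply: (le_trans hTq); apply: cap_homo; rewrite (ltnW hqk) hkn.
have [hpk | hkp] := leqP p k; first by apply: (resid_prefix_tail p_def); rewrite ?hpk.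
have hTp : T q + (p - q)%:R * L <= cap R n p.
  rewrite -(resid_prefix_mid q_le_n p_le_n q_def p_def) ?hqp ?leqnn //.
  by apply: (resid_prefix_tail p_def); rewrite ?leqnn.
rewrite (resid_prefix_mid q_le_n p_le_n q_def p_def) ?(ltnW hqk) ?(ltnW hkp) //.
by apply: le_cap_affine hTq hTp; rewrite (ltnW hqk) (ltnW hkp).
Qed.

End Residual.

Section Decomposition.
Variable R : realFieldType.

(* [v] is the sum of the points [W i e_i] of the segments [[-2 e_i, 2 e_i]] and of the
   points [X i j e_i + Y i j e_j] of the l1-balls of radius 2 of the planes [<e_i, e_j>]. *)
Definition decomposable (n : nat) (v : nat -> R) : Prop :=
  exists (X Y : nat -> nat -> R) (W : nat -> R),
  [/\ forall i j, (i < j)%N -> (j < n)%N -> `|X i j| + `|Y i j| <= 2,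
      forall i, (i < n)%N -> `|W i| <= 2 &
      forall m, (m < n)%N ->
        v m = W m + \sum_(j < n | (m < j)%N) X m j + \sum_(j < n | (j < m)%N) Y j m].

Lemma big_ord_recl_cond n (P : pred nat) (F : nat -> R) :
  \sum_(j < n.+1 | P j) F j = (if P 0%N then F 0%N else 0) + \sum_(j < n | P j.+1) F j.+1.
Proof.
rewrite big_mkcond big_ord_recl; congr (_ + _).
by rewrite [RHS]big_mkcond; apply: eq_bigr => i _; rewrite lift0.
Qed.

(* The first coordinate gives [r j] to its [j]-th partner and spreads [v 0] over the
   remaining capacity: [2 - r j] on each pair and [2] on its own segment. *)
Lemma decomposable_cons n (v r : nat -> R) :
  (forall j, (j < n)%N -> 0 <= r j <= 2) ->
  0 <= v 0%N -> v 0%N + \sum_(0 <= j < n) r j <= 2 * n.+1%:R ->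
  decomposable n (fun j => v j.+1 - r j) -> decomposable n.+1 v.
Proof.
move=> hr hv0 hbudget [X [Y [W [hXY hW hE]]]].
set C := 2 + \sum_(0 <= j < n) (2 - r j).
have hC : C = 2 * n.+1%:R - \sum_(0 <= j < n) r j.
  by rewrite /C sumrB sumr_const_nat_mul subn0 -natr1; ring.
have hs : 0 <= \sum_(0 <= j < n) (2 - r j).
  rewrite big_seq; apply: sumr_ge0 => j; rewrite mem_index_iota => /andP [_ hj].
  by have /andP [_ ?] := hr j hj; lra.
have hC0 : 0 < C by rewrite /C; lra.
have hCv : v 0%N <= C by rewrite hC; lra.
exists (fun i j => if i is i'.+1 then X i' j.-1 else v 0%N * (2 - r j.-1) / C).
exists (fun i j => if i is i'.+1 then Y i' j.-1 else r j.-1).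
exists (fun i => if i is i'.+1 then W i' else 2 * v 0%N / C).
split.
- move=> [|i] [|j] //= hij hjn; last exact: hXY.
  have /andP [hr0 hr2] := hr j hjn.
  rewrite (ger0_norm hr0) ger0_norm; last by rewrite divr_ge0 ?mulr_ge0 //; lra.
  suff : v 0%N * (2 - r j) / C <= 2 - r j by lra.
  by rewrite ler_pdivrMr //; nra.
- move=> [|i] /= hi; last exact: hW.
  by rewrite ger0_norm ?divr_ge0 // ?ler_pdivrMr //; lra.
move=> [|m] hm /=.
  rewrite (@big_ord_recl_cond n (fun j => 0 < j)%N (fun j => v 0%N * (2 - r j.-1) / C)) /= add0r.
  rewrite [X in _ = _ + _ + X]big1 ?addr0 // -mulr_suml -mulr_sumr.
  under eq_bigl => i do rewrite ltn0Sn.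
  rewrite -(@big_mkord _ 0 +%R n xpredT (fun i => 2 - r i)).
  have -> : 2 * v 0%N / C + v 0%N * (\sum_(0 <= i < n) (2 - r i)) / C = v 0%N * C / C.
    by rewrite /C; ring.
  by rewrite mulfK // gt_eqF.
rewrite (@big_ord_recl_cond n (fun j => m.+1 < j)%N (fun j => if m.+1 is i'.+1 then X i' j.-1 else 0)).
rewrite (@big_ord_recl_cond n (fun j => j < m.+1)%N (fun j => if j is i'.+1 then Y i' m else r m)) /= add0r.
by have := hE m hm; lra.
Qed.

Lemma decomposable_flip n (v : nat -> R) m0 :
  decomposable n v -> decomposable n (fun m => if m == m0 then - v m else v m).
Proof.
move=> [X [Y [W [hXY hW hE]]]].
exists (fun i j => if i == m0 then - X i j else X i j).
exists (fun i j => if j == m0 then - Y i j else Y i j).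
exists (fun i => if i == m0 then - W i else W i).
split.
- by move=> i j hij hjn; case: (i == m0); case: (j == m0); rewrite ?normrN; apply: hXY.
- by move=> i hi; case: (i == m0); rewrite ?normrN; apply: hW.
move=> m hm /=; case: eqP => _; last exact: hE.
by rewrite (hE m hm) !sumrN; ring.
Qed.

Lemma water_level n (x : nat -> R) (M B : R) :
  0 <= M -> (forall j, (j < n)%N -> x j <= M) -> 0 <= B ->
  exists2 L, 0 <= L &
    \sum_(0 <= j < n) clamp2 (x j - L) <= B /\
    (L = 0 \/ \sum_(0 <= j < n) clamp2 (x j - L) = B).
Proof.
move=> hM hxM hB; set F := fun L => \sum_(0 <= j < n) clamp2 (x j - L).
have [hF0 | hF0] := lerP (F 0) B; first by exists 0 => //; split => //; left.
pose l := flatten [seq [:: ((1 : R), x j); ((-1 : R), x j - 2)] | j <- index_iota 0 n].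
have eF L : F L = ramp_comb 0 0 l L.
  rewrite /ramp_comb mul0r !add0r big_flatten big_map.
  apply: eq_bigr => j _; rewrite !big_cons big_nil clamp2E /=.
  by rewrite (_ : x j - 2 - L = x j - L - 2); ring.
have hFM : ramp_comb 0 0 l M <= B.
  rewrite -eF /F big1_seq // => j; rewrite mem_index_iota => /andP [_ /andP [_ hj]].
  by apply: clamp2_eq0; have := hxM j hj; lra.
rewrite eF in hF0.
have [L /andP [hL0 _] hL] := ramp_comb_ivt hM (ltW hF0) hFM.
by exists L => //; rewrite -/(F L) eF hL; split; [exact: lexx | right].
Qed.

Lemma decomposable_sorted n (b : nat -> R) :
  (forall i j, (i <= j)%N -> (j < n)%N -> b j <= b i) ->
  (forall i, (i < n)%N -> 0 <= b i) ->
  (forall k, (k <= n)%N -> \sum_(0 <= i < k) b i <= cap R n k) -> decomposable n b.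
Proof.
elim: n b => [|n IH] b b_sorted b_ge0 b_prefix.
  by exists (fun _ _ => 0), (fun _ _ => 0), (fun _ => 0); split.
set x := fun j => b j.+1.
have x_sorted i j : (i <= j)%N -> (j < n)%N -> x j <= x i by move=> ? ?; apply: b_sorted.
have x_ge0 j : (j < n)%N -> 0 <= x j by exact: (b_ge0 j.+1).
have x_prefix k : (k <= n)%N -> \sum_(0 <= j < k) x j <= cap R n.+1 k.
  move=> hk; apply: le_trans (b_prefix k (leqW hk)).
  by apply: ler_sum_nat => i /andP [_ hi]; apply: b_sorted; lia.
have b0x_prefix k : (k <= n)%N -> b 0%N + \sum_(0 <= j < k) x j <= cap R n.+1 k.+1.
  by move=> hk; have := b_prefix k.+1 hk; rewrite big_nat_recl.
have hb0 : b 0%N <= 2 * n.+1%:R by have := b_prefix 1%N isT; rewrite big_nat1 cap1.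
have [L L_ge0 [hbudget level]] : exists2 L, 0 <= L &
    \sum_(0 <= j < n) clamp2 (x j - L) <= 2 * n.+1%:R - b 0%N /\
    (L = 0 \/ \sum_(0 <= j < n) clamp2 (x j - L) = 2 * n.+1%:R - b 0%N).
  by apply: water_level; [exact: (b_ge0 0%N) | move=> j hj; exact: (b_sorted 0%N j.+1) | rewrite subr_ge0].
apply: (@decomposable_cons n b (fun j => clamp2 (x j - L))).
- by move=> j _; apply: clamp2_ge0_le2.
- exact: b_ge0.
- by move: hbudget; lra.
apply: IH.
- by move=> i j hij hjn; apply: sub_clamp2_homo; apply: x_sorted.
- by move=> i hi; apply: sub_clamp2_ge0 => //; apply: x_ge0.
apply: (resid_prefix_le_cap x_sorted x_ge0 x_prefix b0x_prefix L_ge0).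
by case: level => [-> | ->]; [left | right; ring].
Qed.

End Decomposition.

Section Generators.
Variables (R : realFieldType) (n : nat).
Implicit Types (i j : 'I_n) (x y w : R).

Lemma sum_pair_generators i j x y :
  \sum_(s : bool) \sum_(t : bool) pospart (sgnb R s * (x + sgnb R t * y) / 2)
     *: (sgnb R s *: (ebasis R i + sgnb R t *: ebasis R j))
  = x *: ebasis R i + y *: ebasis R j.
Proof.
rewrite !big_bool /sgnb /= !mul1r !mulN1r !mulNr; apply/rowP => k; rewrite !mxE.
rewrite (pospartE ((x + y) / 2)) (pospartE ((x - y) / 2)).
by move: (k == i)%:R (k == j)%:R => a c; field.
Qed.

Lemma sum_single_generators i w :
  \sum_(s : bool) pospart (sgnb R s * w / 2) *: (sgnb R s *: (2 *: ebasis R i)) = w *: ebasis R i.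
Proof.
rewrite !big_bool /sgnb /= !mul1r !mulN1r !mulNr; apply/rowP => k; rewrite !mxE (pospartE (w / 2)).
by field.
Qed.

Lemma decomposition_coord (X Y : nat -> nat -> R) (W : nat -> R) (k : 'I_n) :
  (\sum_(i < n) \sum_(j < n | (i < j)%N) (X i j *: ebasis R i + Y i j *: ebasis R j)
     + \sum_(i < n) W i *: ebasis R i) 0 k
  = W k + \sum_(j < n | (k < j)%N) X k j + \sum_(j < n | (j < k)%N) Y j k.
Proof.
rewrite !mxE !summxE.
under eq_bigr => i _ do rewrite summxE.
under eq_bigr => i _ do under eq_bigr => j _ do rewrite !mxE.
under [X in _ + X = _]eq_bigr => i _ do rewrite !mxE.
under eq_bigr => i _ do rewrite big_split /=.
rewrite big_split /=.
have -> : \sum_(i < n) \sum_(j < n | (i < j)%N) X i j * (k == i)%:R = \sum_(j < n | (k < j)%N) X k j.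
  rewrite (bigD1 k) //= [X in _ + X]big1 ?addr0; first by apply: eq_bigr => j _; rewrite eqxx mulr1.
  by move=> i hik; apply: big1 => j _; rewrite eq_sym (negbTE hik) mulr0.
have -> : \sum_(i < n) \sum_(j < n | (i < j)%N) Y i j * (k == j)%:R = \sum_(j < n | (j < k)%N) Y j k.
  rewrite [RHS]big_mkcond; apply: eq_bigr => i _.
  rewrite big_mkcond (bigD1 k) //= [X in _ + X]big1 ?addr0; first by case: ifP; rewrite ?eqxx ?mulr1.
  by move=> j hjk; case: ifP => //; rewrite eq_sym (negbTE hjk) mulr0.
have -> : \sum_(i < n) W i * (k == i)%:R = W k.
  rewrite (bigD1 k) //= [X in _ + X]big1 ?addr0 ?eqxx ?mulr1 // => i hik.
  by rewrite eq_sym (negbTE hik) mulr0.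
by ring.
Qed.

Lemma in_R_Delta_p_decomposable (mu : 'rV[R]_n) (v : nat -> R) :
  decomposable n v -> (forall m : 'I_n, mu 0 m = v m) -> in_R_Delta_p mu.
Proof.
move=> [X [Y [W [hXY hW hE]]]] hmu.
exists (fun i j s t => if (i < j)%N then pospart (sgnb R s * (X i j + sgnb R t * Y i j) / 2) else 0).
exists (fun i s => pospart (sgnb R s * W i / 2)).
split; [|split].
- move=> i j s t; case: ifP => hij; last by rewrite lexx ler01.
  have := hXY i j hij (ltn_ord j).
  have := lerNnormlW (lexx `|X i j|); have := ler_normlW (lexx `|X i j|).
  have := lerNnormlW (lexx `|Y i j|); have := ler_normlW (lexx `|Y i j|).
  by move=> *; apply: pospart_le1; case: s; case: t; rewrite /sgnb; apply/andP; split; lra.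
- move=> i s; have := hW i (ltn_ord i).
  have := lerNnormlW (lexx `|W i|); have := ler_normlW (lexx `|W i|).
  by move=> *; apply: pospart_le1; case: s; rewrite /sgnb; apply/andP; split; lra.
rewrite (eq_bigr (fun i : 'I_n => \sum_(j < n | (i < j)%N) (X i j *: ebasis R i + Y i j *: ebasis R j))); last first.
  move=> i _; apply: eq_bigr => j hij; rewrite -sum_pair_generators.
  by apply: eq_bigr => s _; apply: eq_bigr => t _; rewrite hij.
rewrite [X in _ = _ + X](eq_bigr (fun i : 'I_n => W i *: ebasis R i)); last first.
  by move=> i _; exact: sum_single_generators.
by apply/rowP => k; rewrite decomposition_coord hmu hE.
Qed.

End Generators.

Section LinearForm.
Variables (R : realFieldType) (n : nat) (f : 'I_n -> R).

Definition lin_form (v : 'rV[R]_n) : R := \sum_(m < n) f m * v 0 m.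

Lemma lin_formD : {morph lin_form : u w / u + w}.
Proof. by move=> u w; rewrite /lin_form -big_split; apply: eq_bigr => m _; rewrite mxE mulrDr. Qed.

Lemma lin_form0 : lin_form 0 = 0.
Proof. by rewrite /lin_form big1 // => m _; rewrite mxE mulr0. Qed.

Lemma lin_formZ a u : lin_form (a *: u) = a * lin_form u.
Proof. by rewrite /lin_form mulr_sumr; apply: eq_bigr => m _; rewrite mxE mulrCA. Qed.

Lemma lin_form_sum (I : Type) (r : seq I) (P : pred I) (F : I -> 'rV[R]_n) :
  lin_form (\sum_(i <- r | P i) F i) = \sum_(i <- r | P i) lin_form (F i).
Proof. exact: (big_morph lin_form lin_formD lin_form0). Qed.

Lemma lin_form_ebasis i : lin_form (ebasis R i) = f i.
Proof.
rewrite /lin_form (bigD1 i) //= big1 ?addr0; first by rewrite /ebasis mxE !eqxx mulr1.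
by move=> m hm; rewrite /ebasis mxE eqxx /= (negbTE hm) mulr0.
Qed.

Lemma lin_form_pair_le (b : bool -> bool -> R) i j :
  (forall s t, 0 <= b s t <= 1) ->
  lin_form (\sum_(s : bool) \sum_(t : bool) b s t *: (sgnb R s *: (ebasis R i + sgnb R t *: ebasis R j)))
  <= `|f i + f j| + `|f i - f j|.
Proof.
move=> hb; rewrite !big_bool /= !lin_formD !lin_formZ !lin_formD !lin_formZ !lin_form_ebasis /sgnb.
have := pos_dot_le_norm (f i + f j) (hb true true) (hb false true).
have := pos_dot_le_norm (f i - f j) (hb true false) (hb false false).
by lra.
Qed.

Lemma lin_form_single_le (b : bool -> R) i :
  (forall s, 0 <= b s <= 1) ->
  lin_form (\sum_(s : bool) b s *: (sgnb R s *: (2 *: ebasis R i))) <= 2 * `|f i|.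
Proof.
move=> hb; rewrite !big_bool /= !lin_formD !lin_formZ !lin_form_ebasis /sgnb.
have := pos_dot_le_norm (2 * f i) (hb true) (hb false).
by rewrite normrM ger0_norm //; lra.
Qed.

(* The weight [2 g i (n - i)] collects the [n - i - 1] pairs [(i, j)], [i < j], and the
   segment of [i], each worth at most [2 g i]. *)
Lemma lin_form_R_Delta_p_le (g : 'I_n -> R) (mu : 'rV[R]_n) :
  (forall i j : 'I_n, (i < j)%N -> `|f i + f j| + `|f i - f j| <= 2 * g i) ->
  (forall i, `|f i| <= g i) ->
  in_R_Delta_p mu -> lin_form mu <= \sum_(i < n) 2 * g i * (n - i)%:R.
Proof.
move=> hfg hf [b1 [b2 [hb1 [hb2 ->]]]].
rewrite lin_formD !lin_form_sum -big_split; apply: ler_sum => i _ /=.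
have -> : ((n - i)%:R : R) = (n - i.+1)%:R + 1.
  by rewrite natr1; congr _%:R; have := ltn_ord i; lia.
rewrite mulrDr mulr1 lerD //; last first.
  by apply: le_trans (lin_form_single_le i (hb2 i)) _; rewrite ler_pM2l.
have hpair (j : 'I_n) (hij : (i < j)%N) := le_trans (lin_form_pair_le i j (hb1 i j)) (hfg i j hij).
rewrite lin_form_sum; apply: le_trans (ler_sum _ hpair) _.
have -> : \sum_(j < n | (i < j)%N) 2 * g i = \sum_(i.+1 <= j < n) 2 * g i by rewrite big_geq_mkord.
by rewrite sumr_const_nat_mul mulrC.
Qed.

End LinearForm.

Lemma normD_normB_le (R : realFieldType) (a b c : R) :
  `|a| <= c -> `|b| <= c -> `|a + b| + `|a - b| <= 2 * c.
Proof.
move=> ha hb; have := lerNnormlW ha; have := ler_normlW ha; have := lerNnormlW hb; have := ler_normlW hb.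
case: (lerP 0 (a + b)) => h1; [rewrite (ger0_norm h1) | rewrite (ltr0_norm h1)];
case: (lerP 0 (a - b)) => h2; rewrite ?(ger0_norm h2) ?(ltr0_norm h2); lra.
Qed.

Lemma R_Delta_p_prefix_le (R : realFieldType) n (mu : 'rV[R]_n) k : (k <= n)%N ->
  in_R_Delta_p mu -> \sum_(i < n | (i < k)%N) mu 0 i <= (2 * n * k - k ^ 2 + k)%N%:R.
Proof.
move=> hkn hR; pose f := fun i : 'I_n => ((i < k)%N%:R : R).
have hfg (i j : 'I_n) : (i < j)%N -> `|f i + f j| + `|f i - f j| <= 2 * f i.
  move=> hij; apply: normD_normB_le; rewrite /f ger0_norm ?ler0n //.
  by case hj: (j < k)%N; rewrite ?ler0n // (_ : (i < k)%N = true) //; lia.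
have hf (i : 'I_n) : `|f i| <= f i by rewrite ger0_norm ?ler0n.
have -> : \sum_(i < n | (i < k)%N) mu 0 i = lin_form f mu.
  by rewrite /lin_form big_mkcond; apply: eq_bigr => i _; rewrite /f; case: ifP; rewrite ?mul1r ?mul0r.
have -> : (2 * n * k - k ^ 2 + k)%N%:R = \sum_(i < n) 2 * f i * (n - i)%:R.
  rewrite -(sum_nat_cap hkn) natr_sum (big_ord_widen n (fun i => (2 * (n - i))%N%:R) hkn).
  by rewrite big_mkcond; apply: eq_bigr => i _; rewrite /f natrM; case: ifP; rewrite ?mulr1 ?mulr0 ?mul0r.
exact: lin_form_R_Delta_p_le hfg hf hR.
Qed.

Lemma R_Delta_p_twisted_le (R : realFieldType) n (mu : 'rV[R]_n) : in_R_Delta_p mu ->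
  \sum_(i < n) (if (i < n.-1)%N then mu 0 i else - mu 0 i) <= (n ^ 2 + n)%N%:R.
Proof.
move=> hR; pose f := fun i : 'I_n => if (i < n.-1)%N then 1 else -1 : R.
have hf i : `|f i| <= 1 by rewrite /f; case: ifP; rewrite ?normrN normr1.
have hfg (i j : 'I_n) : (i < j)%N -> `|f i + f j| + `|f i - f j| <= 2 * 1.
  by move=> _; apply: normD_normB_le.
have -> : \sum_(i < n) (if (i < n.-1)%N then mu 0 i else - mu 0 i) = lin_form f mu.
  by apply: eq_bigr => i _; rewrite /f; case: ifP; rewrite ?mul1r ?mulN1r.
have -> : (n ^ 2 + n)%N%:R = \sum_(i < n) 2 * 1 * (n - i)%:R :> R.
  have -> : (n ^ 2 + n = 2 * n * n - n ^ 2 + n)%N by rewrite !expnS expn0 !muln1; nia.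
  by rewrite -(sum_nat_cap (leqnn n)) natr_sum; apply: eq_bigr => i _; rewrite natrM mulr1.
exact: lin_form_R_Delta_p_le hfg hf hR.
Qed.

Section Dominant.
Variables (R : realFieldType) (n : nat) (mu : 'rV[R]_n.+1).
Hypothesis mu_dom : forall i j : 'I_n.+1, (i <= j)%N -> (j < n)%N -> mu 0 j <= mu 0 i.
Hypothesis mu_last : forall i j : 'I_n.+1, (i < j)%N -> nat_of_ord j = n -> `|mu 0 j| <= mu 0 i.

Definition abs_last (m : nat) : R := if m == n then `|mu 0 (inord m)| else mu 0 (inord m).

Lemma abs_last_sorted i j : (i <= j)%N -> (j < n.+1)%N -> abs_last j <= abs_last i.
Proof.
move=> hij hjn; rewrite /abs_last.
have [ej | nej] := eqVneq j n.
  have [-> | nei] := eqVneq i n; first by rewrite ej.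
  by apply: mu_last; rewrite ?inordK //; lia.
by rewrite (_ : (i == n) = false); [apply: mu_dom; rewrite ?inordK //; lia | apply/negbTE; lia].
Qed.

Lemma abs_last_ge0 i : (i < n.+1)%N -> 0 <= abs_last i.
Proof.
move=> hi; apply: le_trans (abs_last_sorted (_ : i <= n)%N (ltnSn n)); last by lia.
by rewrite /abs_last eqxx normr_ge0.
Qed.

Lemma sum_abs_last k : (k <= n)%N -> \sum_(0 <= i < k) abs_last i = \sum_(i < n.+1 | (i < k)%N) mu 0 i.
Proof.
move=> hkn; rewrite big_mkord (big_ord_widen n.+1 abs_last); last by lia.
apply: eq_bigr => i hik; rewrite /abs_last (_ : (i == n :> nat) = false); last by apply/negbTE; lia.
by rewrite inord_val.
Qed.

Lemma sum_split_last (F : 'I_n.+1 -> R) :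
  \sum_(i < n.+1) F i = \sum_(i < n.+1 | (i < n)%N) F i + F ord_max.
Proof.
rewrite (bigD1 ord_max) //= addrC; congr (_ + _); apply: eq_bigl => i.
by rewrite -(inj_eq val_inj) /=; have := ltn_ord i; case: eqP => /= ? ?; lia.
Qed.

Section SmallFirst.
Hypothesis n_gt0 : (0 < n)%N.
Hypothesis mu_first : mu 0 ord0 <= n.+2%:R.

Lemma le_first i : mu 0 i <= mu 0 ord0.
Proof.
have [hi | hi] := ltnP i n; first exact: mu_dom.
have -> : i = ord_max by apply: val_inj => /=; have := ltn_ord i; lia.
by apply: le_trans (mu_last (i := ord0) (j := ord_max) n_gt0 erefl); apply: ler_norm.
Qed.

Lemma prefix_le_of_first_le k : (1 <= k <= n.+1)%N ->
  \sum_(i < n.+1 | (i < k)%N) mu 0 i <= (2 * n.+1 * k - k ^ 2 + k)%N%:R.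
Proof.
move=> /andP [_ hkn]; apply: (@le_trans _ _ (\sum_(i < n.+1 | (i < k)%N) mu 0 ord0)).
  by apply: ler_sum => i _; apply: le_first.
rewrite -(big_ord_widen n.+1 (fun _ => mu 0 ord0) hkn) sumr_const card_ord -[mu 0 ord0 *+ _]mulr_natl.
apply: (@le_trans _ _ (k%:R * n.+2%:R)); first by apply: ler_wpM2l; rewrite ?ler0n.
by rewrite -natrM ler_nat !expnS expn0 !muln1; nia.
Qed.

Lemma twisted_le_of_first_le :
  \sum_(i < n.+1) (if (i < n)%N then mu 0 i else - mu 0 i) <= (n.+1 ^ 2 + n.+1)%N%:R.
Proof.
apply: (@le_trans _ _ (\sum_(i < n.+1) mu 0 ord0)).
  apply: ler_sum => i _; case: ifP => hi; first exact: le_first.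
  have -> : i = ord_max by apply: val_inj => /=; have := ltn_ord i; lia.
  by apply: le_trans (mu_last (i := ord0) (j := ord_max) n_gt0 erefl); rewrite -normrN ler_norm.
rewrite sumr_const card_ord -[mu 0 ord0 *+ _]mulr_natl.
apply: (@le_trans _ _ (n.+1%:R * n.+2%:R)); first by apply: ler_wpM2l; rewrite ?ler0n.
by rewrite -natrM ler_nat !expnS expn0 !muln1; nia.
Qed.

End SmallFirst.

Hypothesis mu_prefix : forall k, (1 <= k <= n.+1)%N ->
  \sum_(i < n.+1 | (i < k)%N) mu 0 i <= (2 * n.+1 * k - k ^ 2 + k)%N%:R.
Hypothesis mu_twisted :
  \sum_(i < n.+1) (if (i < n)%N then mu 0 i else - mu 0 i) <= (n.+1 ^ 2 + n.+1)%N%:R.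

(* The full prefix inequality bounds [a_n] and the twisted one bounds [- a_n]. *)
Lemma abs_last_prefix k : (k <= n.+1)%N -> \sum_(0 <= i < k) abs_last i <= cap R n.+1 k.
Proof.
move=> hk; have [-> | k0] := eqVneq k 0%N; first by rewrite big_geq // cap0.
have [hkn | hkn] := leqP k n; first by rewrite sum_abs_last // cap_natE //; apply: mu_prefix; lia.
have -> : k = n.+1 by lia.
have hcap : cap R n.+1 n.+1 = (n.+1 ^ 2 + n.+1)%N%:R.
  by rewrite cap_natE //; congr _%:R; rewrite !expnS expn0 !muln1; nia.
have hfull := mu_prefix (k := n.+1) (leqnn _); rewrite -cap_natE // hcap in hfull.
rewrite (eq_bigl xpredT) in hfull; last by move=> i; rewrite ltn_ord.
have htw := mu_twisted; rewrite sum_split_last in hfull; rewrite sum_split_last ltnn in htw.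
rewrite (eq_bigr (fun i => mu 0 i)) in htw; last by move=> i ->.
rewrite big_nat_recr //= sum_abs_last // /abs_last eqxx hcap.
have -> : mu 0 (inord n) = mu 0 ord_max by congr (mu 0 _); apply: val_inj; rewrite /= inordK.
by case: (lerP 0 (mu 0 ord_max)) => h; [rewrite ger0_norm | rewrite ltr0_norm]; lra.
Qed.

Lemma in_R_Delta_p_dominant : in_R_Delta_p mu.
Proof.
have hdec := decomposable_sorted abs_last_sorted abs_last_ge0 abs_last_prefix.
have [hx | hx] := lerP 0 (mu 0 ord_max).
  apply: (in_R_Delta_p_decomposable hdec) => m; rewrite /abs_last inord_val.
  case: eqP => // em; have -> : m = ord_max by apply: val_inj.
  by rewrite ger0_norm.
apply: (in_R_Delta_p_decomposable (decomposable_flip n hdec)) => m.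
rewrite /abs_last inord_val; case: eqP => // em.
have -> : m = ord_max by apply: val_inj.
by rewrite ltr0_norm ?opprK.
Qed.

End Dominant.

Unset Implicit Arguments.

Theorem mainTheorem10 (R : realFieldType) (n : nat) (mu : 'rV[R]_n) :
  (2 <= n)%N ->
  (forall i j : 'I_n, (i <= j)%N -> (j < n.-1)%N -> mu 0 j <= mu 0 i) ->
  (forall i j : 'I_n, (i < j)%N -> nat_of_ord j = n.-1 -> `|mu 0 j| <= mu 0 i) ->
  ((exists z : 'I_n -> int, forall i, mu 0 i = (z i)%:~R) \/
   (exists z : 'I_n -> int, forall i, mu 0 i = (z i)%:~R + 2^-1)) ->
  (in_R_Delta_p mu <->
     ((forall k : nat, (1 <= k <= n)%N ->
         \sum_(i < n | (i < k)%N) mu 0 i <= ((2 * n * k - k ^ 2 + k)%N)%:R) /\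
      \sum_(i < n) (if (i < n.-1)%N then mu 0 i else - mu 0 i)
         <= ((n ^ 2 + n)%N)%:R))
  /\
  ((forall i : 'I_n, nat_of_ord i = 0%N -> mu 0 i <= (n.+1)%:R) -> u_small mu).
Proof.
case: n mu => [|n] mu // n_ge2 mu_dom mu_last _.
have n_gt0 : (0 < n)%N by [].
split; first split.
- move=> hR; split; last exact: R_Delta_p_twisted_le.
  by move=> k /andP [_ hkn]; exact: R_Delta_p_prefix_le.
- by case; apply: in_R_Delta_p_dominant.
move=> mu_first; have {}mu_first := mu_first ord0 erefl.
apply: in_R_Delta_p_dominant => //.
  exact: prefix_le_of_first_le.
exact: twisted_le_of_first_le.
Qed.
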